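(* Let $t>1$ be an integer, let $x,y$ be elements both lying in $A(t)$ or both lying in $B(t)$, with $x,y\notin H(t)$, and suppose $x=(c\rho_t)^{\alpha}(d\rho_t)^{\beta}\,y\,(c\rho_t)^{\gamma}(d\rho_t)^{\delta}$ for some integers $\alpha,\beta,\gamma,\delta$. If $x,y\in A(t)$, then $\alpha+\gamma$, $\beta$ and $\delta$ are uniquely determined modulo $t$ by this equality. If $x,y\in B(t)$, then $\beta+\delta$, $\alpha$ and $\gamma$ are uniquely determined modulo $t$ by this equality.
   Context: Fix integers $m,n>1$ and let $G_{mn}=\langle a,b;\ [a^m,b^n]=1\rangle$; $c=a^m$, $d=b^n$, $H=\langle c,d\rangle$, $A=\langle a,H\rangle$, $B=\langle b,H\rangle$. For an integer $t>1$ let $G_{mn}(t)=\langle a,b;\ [a^m,b^n]=1,\ a^{mt}=b^{nt}=1\rangle$, $\rho_t:G_{mn}\to G_{mn}(t)$ the natural homomorphism, $H(t)=H\rho_t\cong H/H^t$ (so $c\rho_t=cH^t$, $d\rho_t=dH^t$), $A(t)=A\rho_t$, $B(t)=B\rho_t$. *)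

(* The finitely presented group
     G_mn(t) = < a, b ; [a^m, b^n] = 1, a^(mt) = b^(nt) = 1 >
   is modelled by its monoid presentation: words over the letters
   a, a^-1, b, b^-1, modulo the congruence generated by the free-group
   cancellations and the defining relators. *)
From mathcomp Require Import all_boot all_order all_algebra.
Set Implicit Arguments. Unset Strict Implicit. Unset Printing Implicit Defensive.
Import Order.TTheory GRing.Theory Num.Theory.

Inductive letter := La | LAi | Lb | LBi.

Definition word := seq letter.

Definition lpow (l li : letter) (k : int) : word :=
  match k with
  | Posz k => nseq k l
  | Negz k => nseq k.+1 li
  end.

Definition apow (k : int) : word := lpow La LAi k.
Definition bpow (k : int) : word := lpow Lb LBi k.

Inductive basic_rel (m n t : nat) : word -> word -> Prop :=
  | br_a  : basic_rel m n t [:: La; LAi] [::]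
  | br_ai : basic_rel m n t [:: LAi; La] [::]
  | br_b  : basic_rel m n t [:: Lb; LBi] [::]
  | br_bi : basic_rel m n t [:: LBi; Lb] [::]
  | br_comm : basic_rel m n t (apow m%:Z ++ bpow n%:Z) (bpow n%:Z ++ apow m%:Z)
  | br_at : basic_rel m n t (apow (m * t)%:Z) [::]
  | br_bt : basic_rel m n t (bpow (n * t)%:Z) [::].

Inductive Geq (m n t : nat) : word -> word -> Prop :=
  | Geq_refl w : Geq m n t w w
  | Geq_sym u v : Geq m n t u v -> Geq m n t v u
  | Geq_trans u v w : Geq m n t u v -> Geq m n t v w -> Geq m n t u w
  | Geq_step p u v s : basic_rel m n t u v -> Geq m n t (p ++ u ++ s) (p ++ v ++ s).

(* c rho_t = a^m, d rho_t = b^n *)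
Definition cpow (m : nat) (k : int) : word := apow (m%:Z * k).
Definition dpow (n : nat) (k : int) : word := bpow (n%:Z * k).

(* membership in A(t) = <a, d>, B(t) = <b, c>, H(t) = <c, d> (images in G_mn(t)) *)
Definition inA (m n t : nat) (w : word) : Prop :=
  exists s : seq (int * int),
    Geq m n t w (flatten [seq apow p.1 ++ dpow n p.2 | p <- s]).
Definition inB (m n t : nat) (w : word) : Prop :=
  exists s : seq (int * int),
    Geq m n t w (flatten [seq bpow p.1 ++ cpow m p.2 | p <- s]).
Definition inH (m n t : nat) (w : word) : Prop :=
  exists s : seq (int * int),
    Geq m n t w (flatten [seq cpow m p.1 ++ dpow n p.2 | p <- s]).

(* Let G' = < a, b ; a^(mt) = b^(nt) = 1, [a^m, b] = 1 >.  It is a quotient of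
   G_mn(t) in which c = a^m is central, and it is the free product of <a> and
   <c> x <b> amalgamated over <c>, so its elements have unique normal forms
     b^j0 (a^i1 b^j1) ... (a^ir b^jr) c^k,
   with 0 < i_s < m, 0 < j_s < nt for s < r, j_r < nt and k < t.  Right
   multiplication by a letter is computed on normal forms, which gives a right
   action of G_mn(t).  A word of A(t) is moreover equal in G_mn(t) to the word
   of its normal form, whose b-exponents are then multiples of n, so it lies
   in H(t) when r = 0.  Hence for y in A(t) \ H(t) we have r > 0, and in
   c^al d^be y c^ga d^de the central powers of c add up in k, d^be = b^(n be)
   shifts j0 and d^de shifts j_r: comparing normal forms yields al + ga, be
   and de modulo t.  The case of B(t) follows by the symmetry a <-> b,
   m <-> n. *)

From mathcomp Require Import all_boot all_order all_algebra zify.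
Set Implicit Arguments. Unset Strict Implicit. Unset Printing Implicit Defensive.
Import Order.TTheory GRing.Theory Num.Theory.

Lemma nseqSr T k (x : T) : nseq k.+1 x = nseq k x ++ [:: x].
Proof. by rewrite -[k.+1]addn1 nseqD. Qed.

Lemma divnD_carry d a b : (a + b) %/ d = a %/ d + (a %% d + b) %/ d.
Proof. by case: d => [|d]; rewrite ?divn0 // {1}(divn_eq a d.+1) -addnA divnMDl. Qed.

Definition natmod (z : int) (P : nat) : nat := `|(z %% Posz P)%Z|%N.

Lemma natmodE z P : 0 < P -> Posz (natmod z P) = (z %% Posz P)%Z.
Proof. by move=> P_gt0; rewrite /natmod gez0_abs // modz_ge0 // eqz_nat -lt0n. Qed.

Lemma natmod_Negz N P : 0 < P -> (N.+1 * P.-1) %% P = natmod (Negz N) P.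
Proof.
move=> P_gt0; apply/eqP; rewrite -eqz_nat natmodE // -modz_nat.
have -> : Posz (N.+1 * P.-1) = (Posz N.+1 * Posz P + Negz N)%R.
  by rewrite NegzE -{2}(prednK P_gt0); move: P.-1 => q; lia.
by rewrite modzMDl.
Qed.

Lemma natmodM p d w : 0 < p -> 0 < d -> natmod (Posz p * w) (p * d) = p * natmod w d.
Proof.
move=> p_gt0 d_gt0; apply/eqP; rewrite -eqz_nat natmodE ?muln_gt0 ?p_gt0 //.
by rewrite PoszM -mulz_modr ?ltz_nat // -natmodE.
Qed.

Lemma natmod_inj z z' P : 0 < P ->
  (Posz (natmod z P) %% Posz P = Posz (natmod z' P) %% Posz P)%Z ->
  (z %% Posz P = z' %% Posz P)%Z.
Proof. by move=> P_gt0; rewrite !natmodE // !modz_mod. Qed.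

Lemma eqz_modM2l p d z z' : 0 < p ->
  (Posz p * z = Posz p * z' %[mod Posz (p * d)])%Z -> (z = z' %[mod Posz d])%Z.
Proof.
move=> p_gt0; rewrite PoszM -!mulz_modr ?ltz_nat //.
by apply: mulfI; rewrite eqz_nat -lt0n.
Qed.

Lemma modn_addl_cancel j x x' d :
  (j + x = j + x' %[mod d]) -> (Posz x = Posz x' %[mod Posz d])%Z.
Proof. by move/eqP; rewrite eqn_modDl => /eqP; rewrite !modz_nat => ->. Qed.

Section WordCalculus.
Variables m n t : nat.
Local Notation G := (Geq m n t).

Lemma Geq_ctx p u v s : G u v -> G (p ++ u ++ s) (p ++ v ++ s).
Proof.
elim=> {u v} [w|u v _ IH|u v w _ IH1 _ IH2|p' u v s' r].
- exact: Geq_refl.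
- exact: Geq_sym.
- exact: Geq_trans IH2.
- by have := Geq_step (p ++ p') (s' ++ s) r; rewrite !catA.
Qed.

Lemma Geq_catr u v s : G u v -> G (u ++ s) (v ++ s).
Proof. by move=> h; have := Geq_ctx [::] s h. Qed.

Lemma Geq_catl p u v : G u v -> G (p ++ u) (p ++ v).
Proof. by move=> h; have := Geq_ctx p [::] h; rewrite !cats0. Qed.

Lemma Geq_cat u v u' v' : G u v -> G u' v' -> G (u ++ u') (v ++ v').
Proof. by move=> h1 h2; apply: Geq_trans (Geq_catr _ h1) (Geq_catl _ h2). Qed.

Lemma Geq_flatten (f g : int * int -> word) S :
  (forall p, G (f p) (g p)) -> G (flatten (map f S)) (flatten (map g S)).
Proof.
move=> fg; elim: S => [|p S IH] /=; first exact: Geq_refl.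
exact: Geq_cat.
Qed.

Definition wcomm u v := G (u ++ v) (v ++ u).

Lemma wcomm_sym u v : wcomm u v -> wcomm v u.
Proof. exact: Geq_sym. Qed.

Lemma wcomm_Geq u u' v : G u u' -> wcomm u v -> wcomm u' v.
Proof.
move=> h c; apply: Geq_trans (Geq_catr _ (Geq_sym h)) _.
by apply: Geq_trans c _; apply: Geq_catl.
Qed.

Lemma wcomm_cat u1 u2 v : wcomm u1 v -> wcomm u2 v -> wcomm (u1 ++ u2) v.
Proof.
move=> c1 c2; rewrite /wcomm -catA.
by apply: Geq_trans (Geq_catl _ c2) _; rewrite !catA; apply: Geq_catr.
Qed.

Lemma wcomm_inv u u' v :
  G (u ++ u') [::] -> G (u' ++ u) [::] -> wcomm u v -> wcomm u' v.
Proof.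
move=> uu' u'u c.
apply: Geq_trans (_ : G _ (u' ++ v ++ u ++ u')) _.
  by have := Geq_catl (u' ++ v) (Geq_sym uu'); rewrite cats0 -!catA.
apply: Geq_trans (_ : G _ (u' ++ u ++ v ++ u')) _.
  by have := Geq_ctx u' u' (Geq_sym c); rewrite -!catA.
by have := Geq_catr (v ++ u') u'u; rewrite -!catA.
Qed.

Section LetterPowers.
Variables l li : letter.
Hypotheses (l_liK : forall p s, G (p ++ [:: l; li] ++ s) (p ++ s))
           (li_lK : forall p s, G (p ++ [:: li; l] ++ s) (p ++ s)).
Local Notation pw := (lpow l li).

Lemma lpow_addr1 x : G (pw x ++ [:: l]) (pw (x + 1)).
Proof.
case: x => [k|[|k]].
- have -> : (Posz k + 1 = Posz k.+1)%R by lia.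
  by rewrite /lpow nseqSr; apply: Geq_refl.
- exact: (li_lK [::] [::]).
- have -> : (Negz k.+1 + 1 = Negz k)%R by rewrite !NegzE; lia.
  rewrite /lpow [nseq k.+2 _]nseqSr -catA.
  by have := li_lK (nseq k.+1 li) [::]; rewrite !cats0.
Qed.

Lemma lpow_subr1 x : G (pw x ++ [:: li]) (pw (x - 1)).
Proof.
case: x => [[|k]|k].
- exact: Geq_refl.
- have -> : (Posz k.+1 - 1 = Posz k)%R by lia.
  rewrite /lpow [nseq k.+1 _]nseqSr -catA.
  by have := l_liK (nseq k l) [::]; rewrite !cats0.
- have -> : (Negz k - 1 = Negz k.+1)%R by rewrite !NegzE; lia.
  by rewrite /lpow [nseq k.+2 _]nseqSr; apply: Geq_refl.
Qed.

Lemma lpowD x y : G (pw x ++ pw y) (pw (x + y)).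
Proof.
case: y => [N|N]; elim: N => [|N IH].
- by rewrite /= cats0 addr0; apply: Geq_refl.
- rewrite /lpow nseqSr catA; apply: Geq_trans (Geq_catr _ IH) _.
  by rewrite -addn1 PoszD addrA; apply: lpow_addr1.
- by rewrite NegzE; apply: lpow_subr1.
- rewrite /lpow nseqSr catA; apply: Geq_trans (Geq_catr _ IH) _.
  have -> : (x + Negz N.+1 = (x + Negz N) - 1)%R by rewrite !NegzE; lia.
  exact: lpow_subr1.
Qed.

Lemma lpow_modz P : G (pw P) [::] ->
  forall x y, (x %% P = y %% P)%Z -> G (pw x) (pw y).
Proof.
move=> pwP.
have addP x : G (pw (x + P)) (pw x).
  apply: Geq_trans (Geq_sym (lpowD _ _)) _.
  by have := Geq_catl (pw x) pwP; rewrite cats0.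
have addPN x (N : nat) : G (pw (x + P * N%:Z)) (pw x).
  elim: N => [|N IH]; first by rewrite mulr0 addr0; apply: Geq_refl.
  rewrite -addn1 PoszD mulrDr mulr1 addrA.
  exact: Geq_trans (addP _) IH.
have red x : G (pw x) (pw (x %% P)%Z).
  rewrite {1}(divz_eq x P); case: (x %/ P)%Z => N.
  - by rewrite addrC mulrC; apply: addPN.
  - have := addPN (Negz N * P + (x %% P)%Z)%R N.+1.
    have -> : ((Negz N * P + (x %% P)%Z) + P * N.+1%:Z = (x %% P)%Z)%R.
      by rewrite NegzE; lia.
    exact: Geq_sym.
by move=> x y exy; apply: Geq_trans (red x) _; rewrite exy; apply: Geq_sym.
Qed.

Lemma lpowM_wcomm c v : wcomm (pw c) v -> forall k, wcomm (pw (c * k)) v.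
Proof.
move=> cv.
have wcommN (N : nat) : wcomm (pw (c * N%:Z)) v.
  elim: N => [|N IH]; first by rewrite mulr0 /wcomm /= cats0; apply: Geq_refl.
  rewrite -addn1 PoszD mulrDr mulr1.
  exact: wcomm_Geq (lpowD _ _) (wcomm_cat IH cv).
case=> N; first exact: wcommN.
rewrite NegzE mulrN; apply: wcomm_inv (wcommN N.+1).
- by apply: Geq_trans (lpowD _ _) _; rewrite subrr; apply: Geq_refl.
- by apply: Geq_trans (lpowD _ _) _; rewrite addNr; apply: Geq_refl.
Qed.

End LetterPowers.

Let aK p s := Geq_step p s (br_a m n t).
Let aiK p s := Geq_step p s (br_ai m n t).
Let bK p s := Geq_step p s (br_b m n t).
Let biK p s := Geq_step p s (br_bi m n t).

Lemma apowD x y : G (apow x ++ apow y) (apow (x + y)).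
Proof. exact: lpowD aK aiK x y. Qed.

Lemma bpowD x y : G (bpow x ++ bpow y) (bpow (x + y)).
Proof. exact: lpowD bK biK x y. Qed.

Lemma apow_modz x y : (x %% (m * t)%:Z = y %% (m * t)%:Z)%Z -> G (apow x) (apow y).
Proof.
apply: (lpow_modz aK aiK).
by have := Geq_step [::] [::] (br_at m n t); rewrite /= !cats0.
Qed.

Lemma bpow_modz x y : (x %% (n * t)%:Z = y %% (n * t)%:Z)%Z -> G (bpow x) (bpow y).
Proof.
apply: (lpow_modz bK biK).
by have := Geq_step [::] [::] (br_bt m n t); rewrite /= !cats0.
Qed.

Lemma cpow_dpow_wcomm k w : wcomm (cpow m k) (dpow n w).
Proof.
apply/wcomm_sym/(lpowM_wcomm bK biK)/wcomm_sym/(lpowM_wcomm aK aiK).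
by have := Geq_step [::] [::] (br_comm m n t); rewrite /= !cats0.
Qed.

End WordCalculus.

(* (k, j0, l) stands for the normal form b^j0 (a^i1 b^j1) ... (a^ir b^jr) c^k,
   where l = [:: (ir, jr); ...; (i1, j1)] lists the syllables last first. *)
Definition nform := (nat * nat * seq (nat * nat))%type.

Section NormalForms.
Variables (m n t : nat) (m_gt0 : 0 < m) (n_gt0 : 0 < n) (t_gt0 : 0 < t).
Local Notation G := (Geq m n t).

Let mt_gt0 : 0 < m * t. Proof. by rewrite muln_gt0 m_gt0 t_gt0. Qed.
Let nt_gt0 : 0 < n * t. Proof. by rewrite muln_gt0 n_gt0 t_gt0. Qed.

Definition nf_mula (x : nat) (s : nform) : nform :=
  let: (k, j0, l) := s in
  match l with
  | (i, 0) :: l' => let z := i + x in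
      ((k + z %/ m) %% t, j0, if z %% m == 0 then l' else (z %% m, 0) :: l')
  | _ => ((k + x %/ m) %% t, j0, if x %% m == 0 then l else (x %% m, 0) :: l)
  end.

Definition nf_mulb (y : nat) (s : nform) : nform :=
  let: (k, j0, l) := s in
  match l with
  | (i, j) :: l' => (k, j0, (i, (j + y) %% (n * t)) :: l')
  | [::] => (k, (j0 + y) %% (n * t), [::])
  end.

Definition nf_mulc (g : nat) (s : nform) : nform :=
  let: (k, j0, l) := s in ((k + g) %% t, j0, l).

Definition nf_lmul (h : nat * nat) (s : nform) : nform :=
  let: (k, j0, l) := s in ((k + h.1) %% t, (j0 + h.2) %% (n * t), l).

Definition nf_step (s : nform) (c : letter) : nform :=
  match c with
  | La => nf_mula 1 s
  | LAi => nf_mula (m * t).-1 s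
  | Lb => nf_mulb 1 s
  | LBi => nf_mulb (n * t).-1 s
  end.

Definition nf_act (w : word) (s : nform) : nform := foldl nf_step s w.

Definition nf1 : nform := (0, 0, [::]).

Definition syllable_inner (p : nat * nat) := (0 < p.1 < m) && (0 < p.2 < n * t).

Definition syllables_valid (l : seq (nat * nat)) :=
  if l is (i, j) :: l' then [&& 0 < i < m, j < n * t & all syllable_inner l'] else true.

Definition nf_valid (s : nform) :=
  let: (k, j0, l) := s in [&& k < t, j0 < n * t & syllables_valid l].

Ltac splitb := repeat (apply/andP; split).

Lemma nf1_valid : nf_valid nf1.
Proof. by rewrite /= t_gt0 nt_gt0. Qed.

Lemma nf_mula_valid x s : nf_valid s -> nf_valid (nf_mula x s).
Proof.
case: s => [[k j0] [|[i [|j]] l]] /= /and3P[_ hj0 hl].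
- case: eqP => /= h; splitb => //; lia.
- move: hl => /and3P[hi _ hl].
  case: eqP => /= h.
  + case: l hl => [|[i' j'] l] /=; first by splitb => //; lia.
    move=> /andP[/andP[h1 /andP[h2 h3]] h4] /=; rewrite /= in h1 h2 h3.
    splitb => //; lia.
  + splitb => //; lia.
- move: hl => /and3P[hi hj hl].
  case: eqP => /= h; splitb => //=; lia.
Qed.

Lemma nf_mulb_valid y s : nf_valid s -> nf_valid (nf_mulb y s).
Proof. by case: s => [[k j0] [|[i j] l]] /= /and3P[hk hj0 hl]; splitb => //; lia. Qed.

Lemma nf_mulaD x y s : nf_valid s -> nf_mula x (nf_mula y s) = nf_mula (y + x) s.
Proof.
have modt_add k u v : ((k + u) %% t + v) %% t = (k + (u + v)) %% t.
  by rewrite modnDml addnA.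
case: s => [[k j0] [|[i [|j]] l]] /= /and3P[_ hj0 hl].
- rewrite (divnD_carry m y x) -(modnDml y x).
  by case: eqP => h /=; rewrite ?h ?add0n modt_add.
- rewrite addnA (divnD_carry m (i + y) x) -(modnDml (i + y) x).
  case: eqP => h /=; last by rewrite modt_add.
  rewrite h add0n modt_add.
  (* the syllable uncovered by the carry ends with a nonzero power of b *)
  move: hl => /and3P[_ _]; case: l => [|[i' [|j'] ] l] //=.
  by rewrite andbC /= => /andP[_ /andP[_ /andP[]]].
- rewrite (divnD_carry m y x) -(modnDml y x).
  by case: eqP => h /=; rewrite ?h ?add0n modt_add.
Qed.

Lemma nf_mulbD x y s : nf_mulb x (nf_mulb y s) = nf_mulb (y + x) s.
Proof. by case: s => [[k j0] [|[i j] l]] /=; rewrite modnDml addnA. Qed.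

Lemma nf_mula0 s : nf_valid s -> nf_mula 0 s = s.
Proof.
case: s => [[k j0] [|[i [|j]] l]] /= /and3P[hk hj0 hl].
- by rewrite div0n mod0n addn0 modn_small.
- move: hl => /and3P[/andP[hi0 him] _ _].
  rewrite addn0 divn_small // addn0 !modn_small //.
  by case: eqP => // h; move: hi0; rewrite h.
- by rewrite div0n mod0n addn0 modn_small.
Qed.

Lemma nf_mulb0 s : nf_valid s -> nf_mulb 0 s = s.
Proof.
case: s => [[k j0] [|[i j] l]] /= /and3P[hk hj0 hl]; first by rewrite addn0 modn_small.
by move: hl => /and3P[_ hj _]; rewrite addn0 modn_small.
Qed.

Lemma nf_mula_mod x s : nf_mula x s = nf_mula (x %% (m * t)) s.
Proof.
have carry a : ((a + x) %/ m = (a + x %% (m * t)) %/ m + x %/ (m * t) * t) /\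
               ((a + x) %% m = (a + x %% (m * t)) %% m).
  have -> : a + x = (x %/ (m * t) * t) * m + (a + x %% (m * t)).
    rewrite {1}(divn_eq x (m * t)).
    by move: (x %/ (m * t)) (x %% (m * t)) => q r; nia.
  by rewrite divnMDl // modnMDl addnC.
have [e1 e2] := carry 0; rewrite !add0n in e1 e2.
case: s => [[k j0] [|[i [|j]] l]] /=; try have [f1 f2] := carry i;
  by rewrite ?e1 ?e2 ?f1 ?f2 addnA [_ + _ * t]addnC modnMDl.
Qed.

Lemma nf_mulb_mod y s : nf_mulb y s = nf_mulb (y %% (n * t)) s.
Proof. by case: s => [[k j0] [|[i j] l]] /=; rewrite modnDmr. Qed.

Lemma nf_mula_mulc g s : nf_valid s -> nf_mula (m * g) s = nf_mulc g s.
Proof.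
case: s => [[k j0] [|[i [|j]] l]] /= /and3P[hk hj0 hl].
- by rewrite (mulKn _ m_gt0) modnMr.
- move: hl => /and3P[/andP[hi0 him] _ _].
  rewrite [i + _]addnC (mulnC m g) (divnMDl _ _ m_gt0) modnMDl.
  rewrite (divn_small him) addn0 (modn_small him).
  by case: eqP => // h; move: hi0; rewrite h.
- by rewrite (mulKn _ m_gt0) modnMr.
Qed.

Lemma nf_mula_mulbC g y s :
  nf_valid s -> nf_mula (m * g) (nf_mulb y s) = nf_mulb y (nf_mula (m * g) s).
Proof.
move=> v; rewrite !nf_mula_mulc ?nf_mulb_valid //.
by case: s v => [[k j0] [|[i j] l]].
Qed.

Lemma nf_step_valid s c : nf_valid s -> nf_valid (nf_step s c).
Proof. by move=> sv; case: c; rewrite /= ?nf_mula_valid ?nf_mulb_valid. Qed.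

Lemma nf_act_valid w s : nf_valid s -> nf_valid (nf_act w s).
Proof. by elim: w s => [|c w IH] s v //=; apply/IH/nf_step_valid. Qed.

Lemma nf_act_cat u v s : nf_act (u ++ v) s = nf_act v (nf_act u s).
Proof. exact: foldl_cat. Qed.

Lemma nf_act_nseq N s x (f : nat -> nform -> nform) :
  (forall s, nf_valid s -> nf_step s x = f 1 s) ->
  (forall s, nf_valid s -> nf_valid (f 1 s)) ->
  (forall s, nf_valid s -> f 0 s = s) ->
  (forall s a, nf_valid s -> f a (f 1 s) = f (1 + a) s) ->
  nf_valid s -> nf_act (nseq N x) s = f N s.
Proof.
move=> fx fv f0 fD; elim: N s => [|N IH] s v /=; first by rewrite f0.
by rewrite fx // IH ?fD ?fv.
Qed.

Lemma nf_act_nseqa N s : nf_valid s -> nf_act (nseq N La) s = nf_mula N s.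
Proof.
by apply: nf_act_nseq => // {}s v; [apply: nf_mula_valid|apply: nf_mula0|apply: nf_mulaD].
Qed.

Lemma nf_act_nseqai N s : nf_valid s -> nf_act (nseq N LAi) s = nf_mula (N * (m * t).-1) s.
Proof.
apply: (@nf_act_nseq N s LAi (fun a => nf_mula (a * (m * t).-1))) => // {}s v.
- by rewrite mul1n.
- exact: nf_mula_valid.
- by rewrite mul0n nf_mula0.
- by move=> a; rewrite nf_mulaD // -mulnDl.
Qed.

Lemma nf_act_nseqb N s : nf_valid s -> nf_act (nseq N Lb) s = nf_mulb N s.
Proof.
by apply: nf_act_nseq => // {}s v; [apply: nf_mulb_valid|apply: nf_mulb0|move=> a; apply: nf_mulbD].
Qed.

Lemma nf_act_nseqbi N s : nf_valid s -> nf_act (nseq N LBi) s = nf_mulb (N * (n * t).-1) s.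
Proof.
apply: (@nf_act_nseq N s LBi (fun a => nf_mulb (a * (n * t).-1))) => // {}s v.
- by rewrite mul1n.
- exact: nf_mulb_valid.
- by rewrite mul0n nf_mulb0.
- by move=> a; rewrite nf_mulbD // -mulnDl.
Qed.


Lemma nf_act_apow z s : nf_valid s -> nf_act (apow z) s = nf_mula (natmod z (m * t)) s.
Proof.
move=> v; case: z => N; rewrite /apow /lpow.
- by rewrite nf_act_nseqa // nf_mula_mod /natmod modz_nat.
- by rewrite nf_act_nseqai // nf_mula_mod natmod_Negz.
Qed.

Lemma nf_act_bpow z s : nf_valid s -> nf_act (bpow z) s = nf_mulb (natmod z (n * t)) s.
Proof.
move=> v; case: z => N; rewrite /bpow /lpow.
- by rewrite nf_act_nseqb // nf_mulb_mod /natmod modz_nat.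
- by rewrite nf_act_nseqbi // nf_mulb_mod natmod_Negz.
Qed.

Lemma nf_act_cpow g s : nf_valid s -> nf_act (cpow m g) s = nf_mulc (natmod g t) s.
Proof. by move=> v; rewrite /cpow nf_act_apow // natmodM // nf_mula_mulc. Qed.

Lemma nf_act_basic_rel u v s : basic_rel m n t u v -> nf_valid s -> nf_act u s = nf_act v s.
Proof.
case=> sv /=.
- by rewrite nf_mulaD // add1n prednK // nf_mula_mod modnn nf_mula0.
- by rewrite nf_mulaD ?nf_mula_valid // addn1 prednK // nf_mula_mod modnn nf_mula0.
- by rewrite nf_mulbD add1n prednK // nf_mulb_mod modnn nf_mulb0.
- by rewrite nf_mulbD addn1 prednK // nf_mulb_mod modnn nf_mulb0.
- rewrite !nf_act_cat /apow /bpow /lpow nf_act_nseqa // nf_act_nseqb ?nf_mula_valid //.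
  rewrite nf_act_nseqb // nf_act_nseqa ?nf_mulb_valid //.
  by rewrite -(muln1 m) nf_mula_mulbC.
- by rewrite /apow /lpow nf_act_nseqa // nf_mula_mod modnn nf_mula0.
- by rewrite /bpow /lpow nf_act_nseqb // nf_mulb_mod modnn nf_mulb0.
Qed.

Lemma nf_act_Geq u v s : G u v -> nf_valid s -> nf_act u s = nf_act v s.
Proof.
move=> uv; elim: uv s => {u v} [w|u v _ IH|u v w _ IH1 _ IH2|p u v s' r] s sv.
- by [].
- by rewrite IH.
- by rewrite IH1 // IH2.
- by rewrite !nf_act_cat (nf_act_basic_rel r) // nf_act_valid.
Qed.

Definition syllables_word (l : seq (nat * nat)) : word :=
  flatten [seq apow (Posz p.1) ++ bpow (Posz p.2) | p <- rev l].

Definition nf_word (s : nform) : word :=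
  let: (k, j0, l) := s in bpow (Posz j0) ++ syllables_word l ++ cpow m (Posz k).

Lemma syllables_word_cons i j l :
  syllables_word ((i, j) :: l) = syllables_word l ++ apow (Posz i) ++ bpow (Posz j).
Proof. by rewrite /syllables_word rev_cons map_rcons flatten_rcons. Qed.

Lemma apow_cpow_apow i k z (x := natmod z (m * t)) :
  G (apow (Posz i) ++ cpow m (Posz k) ++ apow z)
    (apow (Posz ((i + x) %% m)) ++ cpow m (Posz ((k + (i + x) %/ m) %% t))).
Proof.
have carry a : (a %% m + m * ((k + a %/ m) %% t)) %% (m * t) = (a + m * k) %% (m * t).
  rewrite muln_modr modnDmr; congr (_ %% _).
  by have := divn_eq a m; move: (a %/ m) (a %% m) => q r ->; nia.
have xE := natmodE z mt_gt0; rewrite -/x in xE; move: x xE => x xE.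
rewrite /cpow; apply: Geq_trans (Geq_catl _ (apowD _ _ _ _ _)) _.
apply: Geq_trans (apowD _ _ _ _ _) _.
apply: Geq_trans _ (Geq_sym (apowD _ _ _ _ _)).
apply: apow_modz; rewrite -PoszM -PoszD modz_nat carry -modz_nat.
by rewrite PoszD PoszM addrA PoszD xE [in RHS]addrAC modzDmr.
Qed.

Lemma nf_word_push k j0 l r :
  G (nf_word (k, j0, if r == 0 then l else (r, 0) :: l))
    (bpow (Posz j0) ++ syllables_word l ++ apow (Posz r) ++ cpow m (Posz k)).
Proof. by case: r => [|r] /=; rewrite ?syllables_word_cons -?catA; apply: Geq_refl. Qed.

Lemma nf_word_apow s z : nf_valid s -> G (nf_word s ++ apow z) (nf_word (nf_act (apow z) s)).
Proof.
move=> v; rewrite nf_act_apow //; set x := natmod z (m * t).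
case: s v => [[k j0] l] v.
have push i l' :
  G (bpow (Posz j0) ++ syllables_word l' ++ apow (Posz i) ++ cpow m (Posz k) ++ apow z)
    (nf_word ((k + (i + x) %/ m) %% t, j0,
              if (i + x) %% m == 0 then l' else ((i + x) %% m, 0) :: l')).
  apply: Geq_trans _ (Geq_sym (nf_word_push _ _ _ _)).
  by do 2 apply: Geq_catl; apply: apow_cpow_apow.
case: l v => [|[i [|j]] l] v.
- by have := push 0 [::]; rewrite add0n /= -!catA.
- by have := push i l; rewrite /= syllables_word_cons -!catA.
- by have := push 0 ((i, j.+1) :: l); rewrite add0n /= -!catA.
Qed.

Lemma bpow_cpow_dpow j0 k w :
  G (bpow (Posz j0) ++ cpow m k ++ dpow n w)
    (bpow (Posz ((j0 + natmod (Posz n * w) (n * t)) %% (n * t))) ++ cpow m k).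
Proof.
apply: Geq_trans (Geq_catl _ (cpow_dpow_wcomm _ _ _ _ _)) _.
rewrite catA; apply: Geq_catr; apply: Geq_trans (bpowD _ _ _ _ _) _.
apply: bpow_modz.
by rewrite modz_nat modn_mod -modz_nat PoszD natmodE // modzDmr.
Qed.

Lemma nf_word_dpow s w : nf_valid s -> G (nf_word s ++ dpow n w) (nf_word (nf_act (dpow n w) s)).
Proof.
move=> v; rewrite /dpow nf_act_bpow //.
case: s v => [[k j0] [|[i j] l]] v /=.
- by have := bpow_cpow_dpow j0 (Posz k) w; rewrite -!catA.
- by rewrite !syllables_word_cons -!catA; do 3 apply: Geq_catl; apply: bpow_cpow_dpow.
Qed.

Lemma nf_act_lmul w h s : nf_act w (nf_lmul h s) = nf_lmul h (nf_act w s).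
Proof.
case: h => a b.
have lmul_mula x s' : nf_mula x (nf_lmul (a, b) s') = nf_lmul (a, b) (nf_mula x s').
  by case: s' => [[k j0] [|[i [|j]] l]] /=; congr (_, _, _); rewrite !modnDml addnAC.
have lmul_mulb y s' : nf_mulb y (nf_lmul (a, b) s') = nf_lmul (a, b) (nf_mulb y s').
  by case: s' => [[k j0] [|[i j] l]] //=; rewrite !modnDml addnAC.
elim: w s => [|c w IH] s //=; rewrite -IH; congr (nf_act w _).
by case: c => /=.
Qed.

Lemma nf_act_cpow_dpow a b :
  nf_act (cpow m a ++ dpow n b) nf1 = nf_lmul (natmod a t, natmod (Posz n * b) (n * t)) nf1.
Proof.
by rewrite nf_act_cat nf_act_cpow ?nf1_valid // /dpow nf_act_bpow //= ltn_pmod // nt_gt0.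
Qed.

Lemma nf_act_sandwich a b y c d :
  nf_act (cpow m a ++ dpow n b ++ y ++ cpow m c ++ dpow n d) nf1 =
  nf_lmul (natmod a t, natmod (Posz n * b) (n * t))
          (nf_act (cpow m c ++ dpow n d) (nf_act y nf1)).
Proof. by rewrite catA nf_act_cat nf_act_cpow_dpow nf_act_lmul nf_act_cat. Qed.

Lemma nf_lmul_sandwich_inj k j0 i j l a b c d a' b' c' d'
    (s := (k, j0, (i, j) :: l)) :
  nf_valid s ->
  nf_lmul (natmod a t, natmod (Posz n * b) (n * t)) (nf_act (cpow m c ++ dpow n d) s) =
  nf_lmul (natmod a' t, natmod (Posz n * b') (n * t)) (nf_act (cpow m c' ++ dpow n d') s) ->
  [/\ (a + c = a' + c' %[mod t])%Z, (b = b' %[mod t])%Z & (d = d' %[mod t])%Z].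
Proof.
move=> sv; have mulc_valid g : nf_valid (nf_mulc g s).
  by move: sv => /= /and3P[_ -> ->]; rewrite ltn_pmod.
rewrite !nf_act_cat !nf_act_cpow // /dpow !nf_act_bpow ?mulc_valid //= => -[Ek Ej El].
split.
- move: Ek; rewrite !modnDml -!addnA => /modn_addl_cancel.
  rewrite !PoszD !natmodE // -modzDm -[in RHS]modzDm !modz_mod !modzDm.
  by rewrite (addrC c) (addrC c').
- by apply/(eqz_modM2l n_gt0)/(natmod_inj nt_gt0)/(modn_addl_cancel Ej).
- by apply/(eqz_modM2l n_gt0)/(natmod_inj nt_gt0)/(modn_addl_cancel El).
Qed.

Definition nf_bdvd (s : nform) :=
  let: (k, j0, l) := s in (n %| j0) && all (fun p => n %| p.2) l.

Lemma nf_bdvd_mula x s : nf_bdvd s -> nf_bdvd (nf_mula x s).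
Proof.
case: s => [[k j0] [|[i [|j]] l]] /= /andP[h1 h2]; rewrite h1 /=;
  by case: eqP => _ //=; rewrite ?dvdn0 //=; case/andP: h2.
Qed.

Lemma nf_bdvd_mulb y s : n %| y -> nf_bdvd s -> nf_bdvd (nf_mulb y s).
Proof.
have dvdn_modD a b : n %| a -> n %| b -> n %| (a + b) %% (n * t).
  by move=> /dvdnP[a' ->] /dvdnP[b' ->]; rewrite -mulnDl (mulnC _ n) -muln_modr dvdn_mulr.
move=> ny; case: s => [[k j0] [|[i j] l]] /= /andP[h1 h2].
- by rewrite dvdn_modD.
- by case/andP: h2 => h3 h4; rewrite h1 /= dvdn_modD.
Qed.

Definition A_word (S : seq (int * int)) := flatten [seq apow p.1 ++ dpow n p.2 | p <- S].

Lemma nf_word_A_word S s :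
  nf_valid s -> G (nf_word s ++ A_word S) (nf_word (nf_act (A_word S) s)).
Proof.
elim: S s => [|[a w] S IH] s sv /=; first by rewrite cats0; apply: Geq_refl.
rewrite !nf_act_cat !catA; apply: Geq_trans (IH _ _); last by do 2 apply: nf_act_valid.
apply: Geq_catr; apply: Geq_trans (nf_word_dpow _ _); last exact: nf_act_valid.
by apply: Geq_catr; apply: nf_word_apow.
Qed.

Lemma nf_bdvd_A_word S s : nf_valid s -> nf_bdvd s -> nf_bdvd (nf_act (A_word S) s).
Proof.
elim: S s => [|[a w] S IH] s sv sd //=; rewrite !nf_act_cat.
apply: IH; first by do 2 apply: nf_act_valid.
rewrite /dpow nf_act_bpow ?nf_act_valid // nf_act_apow //.
by apply: nf_bdvd_mulb; [rewrite natmodM // dvdn_mulr | apply: nf_bdvd_mula].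
Qed.

Lemma inA_nf_nil_inH y : inA m n t y -> (nf_act y nf1).2 = [::] -> inH m n t y.
Proof.
move=> [S yS]; rewrite (nf_act_Geq yS nf1_valid).
have wS := nf_word_A_word S nf1_valid.
have nf1_bdvd : nf_bdvd nf1 by rewrite /= dvdn0.
have := nf_bdvd_A_word S nf1_valid nf1_bdvd.
case: (nf_act (A_word S) nf1) wS => [[k j0] l] wS /= /andP[/dvdnP[q j0E] _] l0.
rewrite j0E l0 in wS; exists [:: (Posz k, Posz q)]; rewrite /= cats0.
apply: Geq_trans yS _; apply: Geq_trans (Geq_trans _ wS) _.
  by rewrite /= /cpow mulr0; apply: Geq_refl.
have -> : nf_word (k, q * n, [::]) = dpow n (Posz q) ++ cpow m (Posz k).
  by rewrite /= /dpow -PoszM mulnC.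
exact: Geq_sym (cpow_dpow_wcomm _ _ _ _ _).
Qed.

Lemma Geq_sandwich_A x y : inA m n t y -> ~ inH m n t y ->
  forall a b c d a' b' c' d' : int,
  G x (cpow m a ++ dpow n b ++ y ++ cpow m c ++ dpow n d) ->
  G x (cpow m a' ++ dpow n b' ++ y ++ cpow m c' ++ dpow n d') ->
  [/\ (a + c = a' + c' %[mod t])%Z, (b = b' %[mod t])%Z & (d = d' %[mod t])%Z].
Proof.
move=> yA yH a b c d a' b' c' d' h h'.
have := nf_act_Geq (Geq_trans (Geq_sym h) h') nf1_valid.
rewrite !nf_act_sandwich; have := nf_act_valid y nf1_valid.
case E: (nf_act y nf1) => [[k j0] [|[i j] l]] yv; last exact: nf_lmul_sandwich_inj.
by case: yH; apply: inA_nf_nil_inH; rewrite // E.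
Qed.

End NormalForms.

Definition swap_letter (c : letter) : letter :=
  match c with La => Lb | LAi => LBi | Lb => La | LBi => LAi end.

Definition swap_word (w : word) : word := map swap_letter w.

Lemma swap_word_cat u v : swap_word (u ++ v) = swap_word u ++ swap_word v.
Proof. exact: map_cat. Qed.

Lemma swap_wordK : involutive swap_word.
Proof. by elim=> [|[] w IH] //=; rewrite IH. Qed.

Lemma swap_apow z : swap_word (apow z) = bpow z.
Proof. by case: z => N; rewrite /swap_word /apow /bpow /lpow map_nseq. Qed.

Lemma swap_bpow z : swap_word (bpow z) = apow z.
Proof. by case: z => N; rewrite /swap_word /apow /bpow /lpow map_nseq. Qed.

Lemma swap_cpow m z : swap_word (cpow m z) = dpow m z.
Proof. exact: swap_apow. Qed.

Lemma swap_dpow n z : swap_word (dpow n z) = cpow n z.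
Proof. exact: swap_bpow. Qed.

Lemma swap_word_flatten (f g : int * int -> word) S :
  (forall p, swap_word (f p) = g p) -> swap_word (flatten (map f S)) = flatten (map g S).
Proof. by move=> fg; elim: S => [|p S IH] //=; rewrite swap_word_cat IH fg. Qed.

Lemma Geq_swap m n t u v : Geq m n t u v -> Geq n m t (swap_word u) (swap_word v).
Proof.
elim=> {u v} [w|u v _ IH|u v w _ IH1 _ IH2|p u v s r].
- exact: Geq_refl.
- exact: Geq_sym.
- exact: Geq_trans IH2.
- rewrite !swap_word_cat; case: r.
  + exact: Geq_step (br_b n m t).
  + exact: Geq_step (br_bi n m t).
  + exact: Geq_step (br_a n m t).
  + exact: Geq_step (br_ai n m t).
  + rewrite !swap_word_cat swap_apow swap_bpow.
    exact: Geq_sym (Geq_step _ _ (br_comm n m t)).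
  + by rewrite swap_apow; apply: Geq_step (br_bt n m t).
  + by rewrite swap_bpow; apply: Geq_step (br_at n m t).
Qed.

Lemma inB_swap m n t y : inB m n t y -> inA n m t (swap_word y).
Proof.
move=> [S yS]; exists S; move: (Geq_swap yS).
rewrite (swap_word_flatten (g := fun p => apow p.1 ++ dpow m p.2)) // => p.
by rewrite swap_word_cat swap_bpow swap_cpow.
Qed.

Lemma inH_swap m n t y : inH n m t (swap_word y) -> inH m n t y.
Proof.
move=> [S yS]; exists [seq (p.2, p.1) | p <- S].
move: (Geq_swap yS); rewrite swap_wordK.
rewrite (swap_word_flatten (g := fun p => dpow n p.1 ++ cpow m p.2)); last first.
  by move=> p; rewrite swap_word_cat swap_cpow swap_dpow.
move=> /Geq_trans; apply; rewrite -map_comp.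
by apply: Geq_flatten => p /=; apply: Geq_sym (cpow_dpow_wcomm _ _ _ _ _).
Qed.

Lemma Geq_swap_sandwich m n t y a b c d :
  Geq n m t (swap_word (cpow m a ++ dpow n b ++ y ++ cpow m c ++ dpow n d))
            (cpow n b ++ dpow m a ++ swap_word y ++ cpow n d ++ dpow m c).
Proof.
rewrite !swap_word_cat !swap_cpow !swap_dpow (catA (dpow m a)) (catA (cpow n b)).
apply: Geq_cat; first exact: Geq_sym (cpow_dpow_wcomm _ _ _ _ _).
apply: Geq_catl; exact: Geq_sym (cpow_dpow_wcomm _ _ _ _ _).
Qed.

Lemma Geq_sandwich_B m n t (m_gt0 : 0 < m) (n_gt0 : 0 < n) (t_gt0 : 0 < t) x y :
  inB m n t y -> ~ inH m n t y ->
  forall a b c d a' b' c' d' : int,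
  Geq m n t x (cpow m a ++ dpow n b ++ y ++ cpow m c ++ dpow n d) ->
  Geq m n t x (cpow m a' ++ dpow n b' ++ y ++ cpow m c' ++ dpow n d') ->
  [/\ (b + d = b' + d' %[mod t])%Z, (a = a' %[mod t])%Z & (c = c' %[mod t])%Z].
Proof.
move=> /inB_swap yA yH a b c d a' b' c' d' h h'.
have yH' : ~ inH n m t (swap_word y) by move/inH_swap.
apply: (Geq_sandwich_A n_gt0 m_gt0 t_gt0 (x := swap_word x) yA yH').
- exact: Geq_trans (Geq_swap h) (Geq_swap_sandwich _ _ _ _ _ _ _ _).
- exact: Geq_trans (Geq_swap h') (Geq_swap_sandwich _ _ _ _ _ _ _ _).
Qed.

Theorem lemma2 (m n t : nat) (hm : (1 < m)%N) (hn : (1 < n)%N) (ht : (1 < t)%N) :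
  (forall (x y : word), inA m n t x -> inA m n t y -> ~ inH m n t x -> ~ inH m n t y ->
     forall al be ga de al' be' ga' de' : int,
       Geq m n t x (cpow m al ++ dpow n be ++ y ++ cpow m ga ++ dpow n de) ->
       Geq m n t x (cpow m al' ++ dpow n be' ++ y ++ cpow m ga' ++ dpow n de') ->
       [/\ (al + ga = al' + ga' %[mod t%:Z])%Z,
           (be = be' %[mod t%:Z])%Z &
           (de = de' %[mod t%:Z])%Z])
  /\
  (forall (x y : word), inB m n t x -> inB m n t y -> ~ inH m n t x -> ~ inH m n t y ->
     forall al be ga de al' be' ga' de' : int,
       Geq m n t x (cpow m al ++ dpow n be ++ y ++ cpow m ga ++ dpow n de) ->
       Geq m n t x (cpow m al' ++ dpow n be' ++ y ++ cpow m ga' ++ dpow n de') ->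
       [/\ (be + de = be' + de' %[mod t%:Z])%Z,
           (al = al' %[mod t%:Z])%Z &
           (ga = ga' %[mod t%:Z])%Z]).
Proof.
have [m_gt0 n_gt0 t_gt0] := And3 (ltnW hm) (ltnW hn) (ltnW ht).
split=> x y _ yX _ yH.
- exact: Geq_sandwich_A m_gt0 n_gt0 t_gt0 x y yX yH.
- exact: Geq_sandwich_B m_gt0 n_gt0 t_gt0 x y yX yH.
Qed.
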